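(* Let $I\ge0$, $\beta>0$, $\alpha,\omega\in S_I$ with $\alpha_0>0$. The endpoint constraint $(\alpha,\omega,\beta)$ is feasible if and only if $$\sum_{j=0}^i\alpha_j\ge\sum_{j=0}^i\omega_j\quad (i=0,\dots,I)$$ and $$\sum_{i=0}^I i\omega_i+(I+1)\omega_{I+}\le\sum_{k=0}^{I+1}k\alpha_k+\beta.$$
   Context: $S_I=\{\gamma\in\mathbb{R}^{I+2}:\gamma_j\ge0,\sum_{j=0}^{I+1}\gamma_j=1\}$; components of $\alpha$ are written $\alpha_0,\dots,\alpha_{I+1}$ and of $\omega$ as $\omega_0,\dots,\omega_I,\omega_{I+}$. A valid occupancy function on $[0,\beta]$ is an absolutely continuous $\gamma:[0,\beta]\to S_I$ whose rate $\theta$ (defined by $\dot\gamma_0=-\theta_0$, $\dot\gamma_j=\theta_{j-1}-\theta_j$ for $1\le j\le I$, $\dot\gamma_{I+}=\theta_I$, $\sum_j\theta_j=1$) lies in $S_I$ for a.e. $x$. $(\alpha,\omega,\beta)$ is feasible if there exists a valid occupancy function $\gamma$ on $[0,\beta]$ with $\gamma(0)=\alpha$ and $\gamma(\beta)=\omega$. *)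

From HB Require Import structures.
From mathcomp Require Import all_boot all_order all_algebra.
From mathcomp Require Import all_classical all_reals all_analysis.
Set Implicit Arguments. Unset Strict Implicit. Unset Printing Implicit Defensive.
Import Order.TTheory GRing.Theory Num.Theory numFieldNormedType.Exports.
Local Open Scope classical_set_scope.
Local Open Scope ring_scope.

(* Points of R^{I+2}, components indexed 0..I+1; index I+1 is the "I+" component. *)
Definition simplex (R : realType) (I : nat) (g : 'I_I.+2 -> R) : Prop :=
  (forall j, 0 <= g j) /\ \sum_(j < I.+2) g j = 1.

Definition abs_continuous_on (R : realType) (f : R -> R) (a b : R) : Prop :=
  forall eps : R, 0 < eps -> exists2 delta : R, 0 < delta &
    forall (n : nat) (l r : 'I_n -> R),
      (forall k, a <= l k /\ l k <= r k /\ r k <= b) ->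
      (forall k k', k != k' -> r k <= l k' \/ r k' <= l k) ->
      \sum_(k < n) (r k - l k) < delta ->
      \sum_(k < n) `|f (r k) - f (l k)| < eps.

(* Derivative of the occupancy component j prescribed by the rate theta:
   d gamma_0 = -theta_0, d gamma_j = theta_{j-1} - theta_j (1<=j<=I),
   d gamma_{I+} = theta_I.  (theta_{I+1} does not enter the dynamics.) *)
Definition occ_deriv (R : realType) (I : nat) (th : 'I_I.+2 -> R)
    (j : 'I_I.+2) : R :=
  (match nat_of_ord j with 0 => 0 | k.+1 => th (inord k) end)
  - (if (nat_of_ord j <= I)%N then th j else 0).

Definition valid_occupancy (R : realType) (I : nat) (beta : R)
    (gamma : R -> 'I_I.+2 -> R) : Prop :=
  (forall x, x \in `[0, beta] -> simplex (gamma x)) /\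
  (forall j, abs_continuous_on (fun t => gamma t j) 0 beta) /\
  exists theta : R -> 'I_I.+2 -> R,
    {ae (@lebesgue_measure R), forall x, x \in `[0, beta] ->
       simplex (theta x) /\
       forall j, is_derive x 1 (fun t => gamma t j) (occ_deriv (theta x) j)}.

Definition feasible (R : realType) (I : nat) (alpha omega : 'I_I.+2 -> R)
    (beta : R) : Prop :=
  exists gamma : R -> 'I_I.+2 -> R,
    valid_occupancy beta gamma /\ gamma 0 = alpha /\ gamma beta = omega.

From HB Require Import structures.
From mathcomp Require Import all_boot all_order all_algebra.
From mathcomp Require Import all_classical all_reals all_analysis.
From mathcomp Require Import measurable_realfun ring lra.
Set Implicit Arguments. Unset Strict Implicit. Unset Printing Implicit Defensive.
Import Order.TTheory GRing.Theory Num.Theory numFieldNormedType.Exports.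
Local Open Scope classical_set_scope.
Local Open Scope ring_scope.

(* Necessity: along a valid occupancy path gamma with rate theta, the prefix
   sums \sum_(j <= i) gamma_j and the function \sum_k k gamma_k(x) - x are
   absolutely continuous with a.e. derivatives -theta_i and -theta_(I+1), hence
   nonincreasing.  That an absolutely continuous f with a.e. nonpositive
   derivative is nonincreasing follows by real induction: cover the exceptional
   null set by an open set U of small measure; off U, f grows at rate at most e,
   and by absolute continuity its total increase over non-overlapping intervals
   inside U is at most e.
   Sufficiency: the linear interpolation from alpha to omega has the constant
   rate theta_i = \sum_(j <= i) (alpha_j - omega_j) / beta for i <= I, which the
   prefix inequalities make nonnegative; by Abel summation
   \sum_(i <= I) theta_i = (\sum_k k omega_k - \sum_k k alpha_k) / beta <= 1,
   so the remaining mass theta_(I+1) is nonnegative as well. *)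

Definition nonoverlapping {R : numDomainType} (p q : R * R) : bool :=
  (p.2 <= q.1) || (q.2 <= p.1).

Section abs_continuous_on.
Variables (R : realType) (a b : R).
Implicit Types (f g : R -> R).

Lemma abs_continuous_on_cst (c : R) : abs_continuous_on (fun=> c) a b.
Proof.
move=> e e0; exists 1 => // n l r _ _ _.
by rewrite big1 // => k _; rewrite subrr normr0.
Qed.

Lemma abs_continuous_on_id : abs_continuous_on id a b.
Proof.
move=> e e0; exists e => // n l r lr _; apply: le_lt_trans.
by apply: ler_sum => k _; rewrite ger0_norm // subr_ge0; case: (lr k) => _ [].
Qed.

Lemma abs_continuous_onD f g : abs_continuous_on f a b ->
  abs_continuous_on g a b -> abs_continuous_on (fun t => f t + g t) a b.
Proof.
move=> fac gac e e0; have e2 : 0 < e / 2 by rewrite divr_gt0.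
have [d1 d1_gt0 fd1] := fac _ e2; have [d2 d2_gt0 gd2] := gac _ e2.
exists (Order.min d1 d2); first by rewrite lt_min d1_gt0 d2_gt0.
move=> n l r lr nov; rewrite lt_min => /andP[len1 len2].
have := fd1 n l r lr nov len1; have := gd2 n l r lr nov len2.
suff : \sum_(k < n) `|f (r k) + g (r k) - (f (l k) + g (l k))| <=
    \sum_(k < n) `|f (r k) - f (l k)| + \sum_(k < n) `|g (r k) - g (l k)|.
  by lra.
by rewrite -big_split /=; apply: ler_sum => k _; rewrite opprD addrACA ler_normD.
Qed.

Lemma abs_continuous_onZ (c : R) f : abs_continuous_on f a b ->
  abs_continuous_on (fun t => c * f t) a b.
Proof.
move=> fac e e0; have c1 : 0 < `|c| + 1 by rewrite ltr_wpDl.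
have [d d_gt0 fd] := fac _ (divr_gt0 e0 c1).
exists d => // n l r lr nov len.
under eq_bigr do rewrite /= -mulrBr normrM.
rewrite -mulr_sumr.
apply: le_lt_trans (ler_wpM2l (normr_ge0 c) (ltW (fd n l r lr nov len))) _.
by rewrite mulrA ltr_pdivrMr // mulrDr mulr1; lra.
Qed.

Lemma abs_continuous_onB f g : abs_continuous_on f a b ->
  abs_continuous_on g a b -> abs_continuous_on (fun t => f t - g t) a b.
Proof.
move=> fac /(abs_continuous_onZ (-1)) /(abs_continuous_onD fac).
by congr abs_continuous_on; apply/funext => t; rewrite mulN1r.
Qed.

Lemma abs_continuous_on_sum (I : Type) (s : seq I) (P : pred I)
    (F : I -> R -> R) :
  (forall i, P i -> abs_continuous_on (F i) a b) ->
  abs_continuous_on (fun t => \sum_(i <- s | P i) F i t) a b.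
Proof.
move=> Fac; elim: s => [|i s IH].
  have -> : (fun t => \sum_(i <- [::] | P i) F i t) = fun _ : R => 0.
    by apply/funext => t; rewrite big_nil.
  exact: abs_continuous_on_cst.
have -> : (fun t => \sum_(j <- i :: s | P j) F j t) =
    fun t => (if P i then F i t else 0) + \sum_(j <- s | P j) F j t.
  by apply/funext => t; rewrite big_cons; case: ifP; rewrite ?add0r.
apply: abs_continuous_onD => //.
by case Pi: (P i); [exact: Fac | exact: abs_continuous_on_cst].
Qed.

Lemma abs_continuous_on_seq f (e : R) :
  abs_continuous_on f a b -> 0 < e -> exists2 d, 0 < d &
    forall s : seq (R * R),
      all (fun p => (a <= p.1) && (p.1 <= p.2) && (p.2 <= b)) s ->
      pairwise nonoverlapping s -> \sum_(p <- s) (p.2 - p.1) < d ->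
      \sum_(p <- s) `|f p.2 - f p.1| < e.
Proof.
move=> fac /fac[d d_gt0 fd]; exists d => // s sab snov.
rewrite !(big_nth (0, 0)) !big_mkord => len.
apply: fd len => [k|k k'].
  by have /(allP sab)/andP[/andP[-> ->] ->] := mem_nth (0, 0) (ltn_ord k).
have /(pairwiseP (0, 0)) nov_nth := snov.
rewrite neq_ltn => /orP[] kk'.
  by have /orP[] := nov_nth _ _ (ltn_ord k) (ltn_ord k') kk'; [left|right].
by have /orP[] := nov_nth _ _ (ltn_ord k') (ltn_ord k) kk'; [right|left].
Qed.

End abs_continuous_on.

Section lebesgue_measure_intervals.
Variable R : realType.
Local Notation mu := (@lebesgue_measure R).

Lemma lebesgue_measure_bigsetU_itv (s : seq (R * R)) :
  all (fun p => p.1 <= p.2) s -> pairwise nonoverlapping s ->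
  mu (\big[setU/set0]_(p <- s) `]p.1, p.2]%classic) =
    (\sum_(p <- s) (p.2 - p.1))%:E.
Proof.
elim: s => [|p s IH]; first by rewrite !big_nil measure0.
move=> /= /andP[p12 sle] /andP[pnov snov].
rewrite !big_cons measureU /=.
- rewrite IH // EFinD lebesgue_measure_itv /= lte_fin.
  by case: ltgtP p12 => // <-; rewrite subrr.
- exact: measurable_itv.
- by apply: bigsetU_measurable => q _; exact: measurable_itv.
- rewrite big_distrr /= big_seq big1 // => q qs.
  apply/seteqP; split => // t [/=]; rewrite !in_itv /= => /andP[p1t tp2].
  move=> /andP[q1t tq2]; move/allP: pnov => /(_ q qs) /orP[] /=; lra.
Qed.

Lemma lebesgue_measure_nonoverlapping (U : set R) (s : seq (R * R)) :
  measurable U -> all (fun p => p.1 <= p.2) s -> pairwise nonoverlapping s ->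
  (forall p, p \in s -> `]p.1, p.2] `<=` U) ->
  ((\sum_(p <- s) (p.2 - p.1))%:E <= mu U)%E.
Proof.
move=> mU sle snov sU; rewrite -lebesgue_measure_bigsetU_itv //.
apply: le_measure; rewrite ?inE //.
  by apply: bigsetU_measurable => q _; exact: measurable_itv.
rewrite big_seq; apply: (big_ind (fun X => X `<=` U)) => // X Y XU YU t.
by case=> [/XU|/YU].
Qed.

Lemma negligible_open_cover (N : set R) (d : R) : mu.-negligible N -> 0 < d ->
  exists U, [/\ open U, N `<=` U & (mu U < d%:E)%E].
Proof.
move=> /negligible_outer_measure N0 d_gt0.
have [U [oU NU muU]] := outer_measure_open_le N (divr_gt0 d_gt0 (ltr0Sn _ 1)).
exists U; split => //; apply: le_lt_trans muU _.
by rewrite N0 add0e lte_fin; lra.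
Qed.

End lebesgue_measure_intervals.

Section derivatives.
Variables (R : numFieldType) (V W : normedModType R).

Lemma is_derive_sum_cond n (P : pred 'I_n) (F : 'I_n -> V -> W) (dF : 'I_n -> W)
    (x v : V) :
  (forall j, P j -> is_derive x v (F j) (dF j)) ->
  is_derive x v (fun t => \sum_(j < n | P j) F j t) (\sum_(j < n | P j) dF j).
Proof.
move=> FD; have -> : (fun t => \sum_(j < n | P j) F j t) =
    \sum_(j < n) (fun t => if P j then F j t else 0).
  by apply/funext => t; rewrite fct_sumE big_mkcond.
rewrite [X in is_derive _ _ _ X]big_mkcond /=; apply: is_derive_sum => j.
by case Pj: (P j); [exact: FD | exact: is_derive_cst].
Qed.

Lemma is_derive_affine (a c x : R) : is_derive x 1 (fun t => a + c * t) c.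
Proof.
have := is_deriveD (is_derive_cst a x 1) (is_deriveZ c (is_derive_id x 1)).
by rewrite add0r /GRing.scale /= mulr1.
Qed.

End derivatives.

Section real_analysis.
Variable R : realType.

Lemma is_derive_le0_growth (f : R -> R) (x d e : R) :
  0 < e -> d <= 0 -> is_derive x 1 f d ->
  exists2 r, 0 < r & forall y, `|y - x| < r ->
    (x <= y -> f y - f x <= e * (y - x)) /\ (y <= x -> f x - f y <= e * (x - y)).
Proof.
move=> e0 d0 [/cvg_ex[l fl] fd].
have ld : l = d by rewrite -fd; apply/esym/cvg_lim.
move: fl; rewrite ld => /cvgrPdist_lt /(_ e e0) /nbhs_ballP[r /= r0 near_d].
exists r => // y xy_r; have [<-|yx] := eqVneq y x; first by rewrite !subrr mulr0.
have : `|d - (y - x)^-1 * (f y - f x)| < e.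
  have := near_d (y - x); rewrite /ball /= sub0r normrN subr_eq0.
  by rewrite /GRing.scale /= mulr1 subrK => /(_ xy_r yx).
rewrite ltr_norml => /andP[quot_lt _].
have quot_le : (y - x)^-1 * (f y - f x) <= e by lra.
split => [xy | yx'].
  have yx_gt0 : 0 < y - x by rewrite subr_gt0 lt_neqAle eq_sym yx xy.
  by move: quot_le; rewrite ler_pdivrMl // mulrC.
have xy_gt0 : 0 < x - y by rewrite subr_gt0 lt_neqAle yx yx'.
by move: quot_le; rewrite -mulrNN -invrN !opprB ler_pdivrMl // mulrC.
Qed.

Lemma real_induction (P : R -> Prop) (a b : R) : a <= b -> P a ->
  (forall c, a <= c <= b -> exists2 r, 0 < r &
     forall x, a <= x <= c -> c - r < x -> P x ->
     forall y, c <= y < c + r -> y <= b -> P y) ->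
  P b.
Proof.
move=> ab Pa step; pose S := [set x | a <= x <= b /\ P x].
have Sa : S a by split; rewrite ?lexx.
have supS : has_sup S by split; [exists a | exists b => x [/andP[]]].
have a_le : a <= sup S by exact: sup_upper_bound.
have le_b : sup S <= b by apply: ge_sup; [exists a | move=> x [/andP[]]].
have [r r0 Pnear] := step (sup S) (introT andP (conj a_le le_b)).
have [x Sx xr] := sup_adherent r0 supS.
have x_le := sup_upper_bound supS Sx.
case: Sx => /andP[ax _] Px.
have P_ge y : sup S <= y < sup S + r -> y <= b -> P y.
  by move=> ySr yb; apply: (Pnear x) => //; rewrite ax x_le.
have [b_le | lt_b] := leP b (sup S).
  have <- : sup S = b by apply/eqP; rewrite eq_le le_b.
  by apply: P_ge; rewrite ?lexx // ltrDl.
pose y := Order.min (sup S + r / 2) b.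
have y_gt : sup S < y by rewrite lt_min lt_b andbT ltrDl divr_gt0.
have y_le : y <= sup S + r / 2 by rewrite ge_min lexx.
have y_le_b : y <= b by rewrite ge_min lexx orbT.
have Sy : S y.
  split; first by apply/andP; split; lra.
  by apply: P_ge => //; apply/andP; split; lra.
by have := sup_upper_bound supS Sy; lra.
Qed.

End real_analysis.

Section increment_bound.
Variables (R : realType) (f : R -> R) (U : set R) (a e : R).

Definition intervals_within (x : R) (s : seq (R * R)) :=
  [/\ all (fun p => (a <= p.1) && (p.1 <= p.2) && (p.2 <= x)) s,
      pairwise nonoverlapping s &
      forall p, p \in s -> `]p.1, p.2] `<=` U].

Definition increment_bound (x : R) := exists2 s, intervals_within x s &
  f x - f a <= e * (x - a) + \sum_(p <- s) (f p.2 - f p.1).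

Lemma increment_bound_refl : increment_bound a.
Proof. by exists [::]; [split | rewrite big_nil !subrr mulr0 addr0]. Qed.

Lemma increment_bound_slow x y : x <= y -> f y - f x <= e * (y - x) ->
  increment_bound x -> increment_bound y.
Proof.
move=> xy fxy [s [sax snov sU] fx]; exists s.
  split=> //; apply: sub_all sax => p /andP[-> px]; exact: le_trans px xy.
have : e * (y - a) = e * (y - x) + e * (x - a) by ring.
lra.
Qed.

Hypothesis e_gt0 : 0 < e.

Lemma increment_bound_cover x y : a <= x <= y -> `]x, y] `<=` U ->
  increment_bound x -> increment_bound y.
Proof.
move=> /andP[ax xy] xyU [s [sax snov sU] fx]; exists ((x, y) :: s).
- split => /=.
  + rewrite ax xy lexx; apply: sub_all sax => p /andP[-> px].
    exact: le_trans px xy.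
  + rewrite snov andbT; apply: sub_all sax => p /andP[_ px].
    by rewrite /nonoverlapping /= px orbT.
  + by move=> p; rewrite in_cons => /orP[/eqP -> //|]; exact: sU.
- rewrite big_cons /=.
  have : e * (x - a) <= e * (y - a) by apply: ler_wpM2l; [exact: ltW | lra].
  lra.
Qed.

Variable b : R.
Hypotheses (oU : open U)
  (fD : forall c, a <= c <= b -> ~ U c -> exists2 d, d <= 0 & is_derive c 1 f d).

Lemma increment_bound_local c : a <= c <= b -> exists2 r, 0 < r &
  forall x, a <= x <= c -> c - r < x -> increment_bound x ->
  forall y, c <= y < c + r -> y <= b -> increment_bound y.
Proof.
move=> cab; have [Uc|nUc] := pselect (U c).
  have /nbhs_ballP[r /= r0 cU] := oU Uc.
  exists r => // x /andP[ax xc] xr Px y /andP[cy yr] yb.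
  apply: increment_bound_cover Px; first by rewrite ax (le_trans xc cy).
  move=> t /=; rewrite in_itv /= => /andP[xt ty]; apply: cU.
  by rewrite /ball /= ltr_norml; apply/andP; split; lra.
have [d d0 fd] := fD cab nUc.
have [r r0 grow] := is_derive_le0_growth e_gt0 d0 fd.
exists r => // x /andP[ax xc] xr Px y /andP[cy yr] yb.
have Pc : increment_bound c.
  apply: (increment_bound_slow xc _ Px); apply: (proj2 (grow x _)) => //.
  by rewrite ltr_norml; apply/andP; split; lra.
apply: (increment_bound_slow cy _ Pc); apply: (proj1 (grow y _)) => //.
by rewrite ltr_norml; apply/andP; split; lra.
Qed.

Lemma increment_bound_right_end : a <= b -> increment_bound b.
Proof.
move=> ab; exact: real_induction ab increment_bound_refl increment_bound_local.
Qed.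

End increment_bound.

Section monotonicity.
Variable R : realType.
Local Notation mu := (@lebesgue_measure R).

Lemma abs_continuous_ae_nonincreasing (f : R -> R) (a b : R) :
  a <= b -> abs_continuous_on f a b ->
  {ae mu, forall x, x \in `[a, b] -> exists2 d, d <= 0 & is_derive x 1 f d} ->
  f b <= f a.
Proof.
move=> ab fac fD; apply/ler_addgt0Pr => e e0.
pose e1 := e / (b - a + 1).
have ba1 : 0 < b - a + 1 by lra.
have e1_gt0 : 0 < e1 by rewrite divr_gt0.
have [d d_gt0 fd] := abs_continuous_on_seq fac e1_gt0.
(* [{ae mu, P}] is by definition [mu.-negligible (~` [set x | P x])]. *)
have [U [oU NU muU]] := negligible_open_cover fD d_gt0.
have fDU c : a <= c <= b -> ~ U c -> exists2 g, g <= 0 & is_derive c 1 f g.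
  by move=> cab /(contra_not (@NU c)) /contrapT; apply; rewrite in_itv.
have [s [sab snov sU] fb] := increment_bound_right_end e1_gt0 oU fDU ab.
have len_d : \sum_(p <- s) (p.2 - p.1) < d.
  rewrite -lte_fin; apply: le_lt_trans muU.
  apply: lebesgue_measure_nonoverlapping => //; first exact: open_measurable.
  by apply: sub_all sab => p /andP[/andP[]].
have := fd s sab snov len_d.
have : \sum_(p <- s) (f p.2 - f p.1) <= \sum_(p <- s) `|f p.2 - f p.1|.
  by apply: ler_sum => p _; exact: ler_norm.
have : e1 * (b - a) + e1 = e by rewrite /e1; field; rewrite gt_eqF.
lra.
Qed.

End monotonicity.

Section prefix_sum.
Variable R : numDomainType.

Definition prefix_sum n (c : 'I_n -> R) (i : nat) : R :=
  \sum_(j < n | (j <= i)%N) c j.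

Lemma prefix_sum_total n (c : 'I_n -> R) i : (n <= i.+1)%N ->
  prefix_sum c i = \sum_(j < n) c j.
Proof. by move=> ni; apply: eq_bigl => j; rewrite -ltnS (leq_trans _ ni). Qed.

Lemma prefix_sum0 n (c : 'I_n.+1 -> R) : prefix_sum c 0 = c ord0.
Proof. by rewrite /prefix_sum (big_pred1 ord0) // => j; rewrite leqn0. Qed.

Lemma prefix_sumS n (c : 'I_n.+1 -> R) i : (i < n)%N ->
  prefix_sum c i.+1 = prefix_sum c i + c (inord i.+1).
Proof.
move=> i_lt; rewrite /prefix_sum (bigD1 (inord i.+1)) /= ?inordK // addrC.
congr (_ + _); apply: eq_bigl => j.
by rewrite -(inj_eq val_inj) /= inordK // andbC -ltn_neqAle.
Qed.

Lemma sum_gt_prefix_sum n (c : 'I_n -> R) i :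
  \sum_(j < n | (i < j)%N) c j = \sum_(j < n) c j - prefix_sum c i.
Proof.
rewrite /prefix_sum [X in _ = X - _](bigID (fun j : 'I_n => (j <= i)%N)) /=.
by rewrite addrAC subrr add0r; apply: eq_bigl => j; rewrite ltnNge.
Qed.

Lemma weighted_sum_exchange n (c : 'I_n -> R) :
  \sum_(k < n) k%:R * c k = \sum_(i < n) \sum_(k < n | (i < k)%N) c k.
Proof.
transitivity (\sum_(k < n) \sum_(i < n | (i < k)%N) c k).
  apply: eq_bigr => k _.
  rewrite -(big_ord_widen _ (fun=> c k) (ltnW (ltn_ord k))).
  by rewrite sumr_const card_ord mulr_natl.
by rewrite (exchange_big_dep xpredT).
Qed.

Lemma weighted_sum_prefix_sum n (c : 'I_n.+1 -> R) :
  \sum_(j < n.+1) c j = 0 ->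
  \sum_(k < n.+1) k%:R * c k = - \sum_(i < n) prefix_sum c i.
Proof.
move=> c0; rewrite weighted_sum_exchange big_ord_recr /=.
rewrite [X in _ + X]big_pred0 => [|k]; last by rewrite ltnNge -ltnS ltn_ord.
rewrite addr0 -sumrN; apply: eq_bigr => i _.
by rewrite sum_gt_prefix_sum c0 sub0r.
Qed.

End prefix_sum.

Section occupancy_rate.
Variables (R : realType) (I : nat).
Implicit Type th : 'I_I.+2 -> R.

Lemma prefix_sum_occ_deriv th i : (i <= I)%N ->
  prefix_sum (occ_deriv th) i = - th (inord i).
Proof.
elim: i => [_|i IH iI].
  rewrite prefix_sum0 /occ_deriv /= sub0r.
  by congr (- th _); apply: val_inj; rewrite /= inordK.
rewrite prefix_sumS ?IH; [|exact: ltnW..].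
rewrite /occ_deriv inordK /=; last exact: ltnW.
by rewrite iI addKr.
Qed.

Lemma sum_occ_deriv th : \sum_(j < I.+2) occ_deriv th j = 0.
Proof.
rewrite -(prefix_sum_total _ (leqnn I.+2)) prefix_sumS // prefix_sum_occ_deriv //.
by rewrite /occ_deriv inordK //= ltnn subr0 addNr.
Qed.

Lemma weighted_sum_occ_deriv th :
  \sum_(k < I.+2) k%:R * occ_deriv th k = \sum_(j < I.+2) th j - th ord_max.
Proof.
rewrite weighted_sum_prefix_sum ?sum_occ_deriv //.
rewrite [X in _ = X - _]big_ord_recr /= addrK -sumrN.
apply: eq_bigr => i _; rewrite prefix_sum_occ_deriv ?opprK; last by rewrite -ltnS.
by congr th; apply: val_inj; rewrite /= inordK //; apply: leqW.
Qed.

Lemma occ_deriv_prefix_sum (c : 'I_I.+2 -> R) th :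
  \sum_(j < I.+2) c j = 0 ->
  (forall j : 'I_I.+2, (j <= I)%N -> th j = - prefix_sum c j) ->
  occ_deriv th =1 c.
Proof.
move=> c0 thc [[|k] kI]; rewrite /occ_deriv /=.
  by rewrite thc // prefix_sum0 sub0r opprK; congr c; apply: val_inj.
have k_le : (k <= I)%N by rewrite -ltnS.
have -> : c (Ordinal kI) = c (inord k.+1).
  by congr c; apply: val_inj; rewrite /= inordK.
rewrite (thc (inord k)) inordK ?(ltnW kI) //; case: (ltnP k I) => [kI' | Ik].
  by rewrite thc // prefix_sumS // opprK addKr.
have -> : k = I by apply/eqP; rewrite eqn_leq k_le.
move: c0; rewrite -(prefix_sum_total _ (leqnn I.+2)) prefix_sumS // subr0.
by move/eqP; rewrite addrC addr_eq0 => /eqP ->.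
Qed.

End occupancy_rate.

Section feasibility.
Variables (R : realType) (I : nat).
Implicit Types (alpha omega : 'I_I.+2 -> R) (gamma : R -> 'I_I.+2 -> R).

Lemma valid_occupancy_prefix_sum_le beta gamma i :
  0 <= beta -> valid_occupancy beta gamma -> (i <= I)%N ->
  prefix_sum (gamma beta) i <= prefix_sum (gamma 0) i.
Proof.
move=> b0 [_ [gac [th thD]]] iI.
pose f t := prefix_sum (gamma t) i.
apply: (abs_continuous_ae_nonincreasing (f := f) b0).
  by apply: abs_continuous_on_sum => j _; exact: gac.
apply: negligibleS thD => x /= + thDx; apply => /thDx[[th_ge0 _] gD].
exists (- th x (inord i)); first by rewrite oppr_le0 th_ge0.
by rewrite -prefix_sum_occ_deriv //; exact: is_derive_sum_cond.
Qed.

Lemma valid_occupancy_weighted_sum_le beta gamma :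
  0 <= beta -> valid_occupancy beta gamma ->
  \sum_(k < I.+2) k%:R * gamma beta k <= \sum_(k < I.+2) k%:R * gamma 0 k + beta.
Proof.
move=> b0 [_ [gac [th thD]]].
pose f t := \sum_(k < I.+2) k%:R * gamma t k - t.
suff : f beta <= f 0 by rewrite /f; lra.
apply: abs_continuous_ae_nonincreasing b0 _ _.
  apply: abs_continuous_onB; last exact: abs_continuous_on_id.
  by apply: abs_continuous_on_sum => k _; exact/abs_continuous_onZ/gac.
apply: negligibleS thD => x /= + thDx; apply => /thDx[[th_ge0 th1] gD].
exists (- th x ord_max); first by rewrite oppr_le0 th_ge0.
have -> : - th x ord_max = \sum_(k < I.+2) k%:R * occ_deriv (th x) k - 1.
  by rewrite weighted_sum_occ_deriv th1 addrAC subrr add0r.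
have dsum : is_derive x 1 (fun t => \sum_(k < I.+2) k%:R * gamma t k)
    (\sum_(k < I.+2) k%:R * occ_deriv (th x) k).
  by apply: is_derive_sum_cond => k _; exact: is_deriveZ.
exact: is_deriveB dsum (is_derive_id x 1).
Qed.

Lemma simplex_lerp alpha omega t :
  simplex alpha -> simplex omega -> 0 <= t <= 1 ->
  simplex (fun j => alpha j + t * (omega j - alpha j)).
Proof.
move=> [alpha_ge0 alpha1] [omega_ge0 omega1] /andP[t0 t1]; split => [j|].
  have -> : alpha j + t * (omega j - alpha j) = (1 - t) * alpha j + t * omega j.
    by ring.
  by rewrite addr_ge0 // mulr_ge0 // subr_ge0.
by rewrite big_split /= -mulr_sumr sumrB alpha1 omega1 subrr mulr0 addr0.
Qed.

Lemma exists_constant_rate beta alpha omega :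
  0 < beta -> simplex alpha -> simplex omega ->
  (forall i, (i <= I)%N -> prefix_sum omega i <= prefix_sum alpha i) ->
  \sum_(k < I.+2) k%:R * omega k <= \sum_(k < I.+2) k%:R * alpha k + beta ->
  exists2 th, simplex th & occ_deriv th =1 (fun j => (omega j - alpha j) / beta).
Proof.
move=> b0 [_ a1] [_ o1] le_prefix le_mean.
pose c j := (omega j - alpha j) / beta.
have c0 : \sum_(j < I.+2) c j = 0 by rewrite -mulr_suml sumrB a1 o1 subrr mul0r.
have c_prefix i :
    prefix_sum c i = (prefix_sum omega i - prefix_sum alpha i) / beta.
  by rewrite /prefix_sum -mulr_suml sumrB.
have c_mean : - \sum_(i < I.+1) prefix_sum c i <= 1.
  rewrite -weighted_sum_prefix_sum //.
  have -> : \sum_(k < I.+2) k%:R * c k =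
      (\sum_(k < I.+2) k%:R * omega k - \sum_(k < I.+2) k%:R * alpha k) / beta.
    by rewrite -sumrB mulr_suml; apply: eq_bigr => k _; rewrite /c; ring.
  by rewrite ler_pdivrMr // mul1r; lra.
pose th (j : 'I_I.+2) := if (j <= I)%N then - prefix_sum c j
  else 1 + \sum_(i < I.+1) prefix_sum c i.
exists th; last by apply: occ_deriv_prefix_sum => // j jI; rewrite /th jI.
split => [j|].
  rewrite /th; case: ifP => [jI|_]; last by rewrite -subr_ge0 opprK in c_mean.
  by rewrite c_prefix oppr_ge0 pmulr_lle0 ?invr_gt0 // subr_le0 le_prefix.
have th_low : \sum_(i < I.+1) th (widen_ord (leqnSn _) i) =
    - \sum_(i < I.+1) prefix_sum c i.
  by rewrite -sumrN; apply: eq_bigr => i _; rewrite /th /= -ltnS ltn_ord.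
by rewrite big_ord_recr /= th_low /th ltnn addrCA addNr addr0.
Qed.

Lemma feasible_of_constant_rate beta alpha omega th :
  0 < beta -> simplex alpha -> simplex omega -> simplex th ->
  occ_deriv th =1 (fun j => (omega j - alpha j) / beta) ->
  feasible alpha omega beta.
Proof.
move=> b0 sa so sth thD.
exists (fun x j => alpha j + (omega j - alpha j) / beta * x); split; last first.
  split; apply/funext => j; first by rewrite mulr0 addr0.
  by rewrite divfK ?gt_eqF // addrC subrK.
split; [|split].
- move=> x; rewrite in_itv /= => /andP[x0 xb].
  have -> : (fun j => alpha j + (omega j - alpha j) / beta * x) =
      (fun j => alpha j + x / beta * (omega j - alpha j)).
    by apply/funext => j; ring.
  apply: simplex_lerp => //.
  apply/andP; split; first exact: divr_ge0 x0 (ltW b0).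
  by rewrite ler_pdivrMr // mul1r.
- move=> j; apply: abs_continuous_onD; first exact: abs_continuous_on_cst.
  exact/abs_continuous_onZ/abs_continuous_on_id.
- exists (fun=> th); apply: aeW => x _; split => // j.
  by rewrite thD; exact: is_derive_affine.
Qed.

End feasibility.

Unset Implicit Arguments.

Theorem lemma2p4 (R : realType) (I : nat) (beta : R)
    (alpha omega : 'I_I.+2 -> R) :
  0 < beta -> simplex alpha -> simplex omega -> 0 < alpha ord0 ->
  (feasible alpha omega beta <->
   ((forall i : nat, (i <= I)%N ->
       \sum_(j < I.+2 | (nat_of_ord j <= i)%N) omega j
         <= \sum_(j < I.+2 | (nat_of_ord j <= i)%N) alpha j) /\
    \sum_(k < I.+2) (nat_of_ord k)%:R * omega k
      <= \sum_(k < I.+2) (nat_of_ord k)%:R * alpha k + beta)).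
Proof.
move=> b0 sa so _; split.
- move=> [gamma [gv [<- <-]]]; split => [i iI|].
  + exact: valid_occupancy_prefix_sum_le (ltW b0) gv iI.
  + exact: valid_occupancy_weighted_sum_le (ltW b0) gv.
- move=> [le_prefix le_mean].
  have [th sth thD] := exists_constant_rate b0 sa so le_prefix le_mean.
  exact: feasible_of_constant_rate b0 sa so sth thD.
Qed.
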